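(* Let $n,m\ge1$, $\vec x,\vec y\in\hat N^n$ and $\vec a,\vec b\in\hat N^m$. Then, for the componentwise order, (i) $\vec x\tilde\ltimes\vec a<\vec x\tilde\ltimes\vec b$ if and only if $\vec a<\vec b$; (ii) $\vec x\tilde\ltimes\vec a<\vec y\tilde\ltimes\vec a$ if and only if $\vec x<\vec y$.
   Context: $\hat N^n$ ($n\ge1$) is the set of names of planar rooted binary trees with $n$ internal vertices and $\hat N^0=\{()\}$; recursively, every element of $\hat N^n$, $n\ge1$, is uniquely $\vec v_l\vee\vec v_r:=(\vec v_l,1,p+1+\vec v_r)$ with $\vec v_l\in\hat N^p,\vec v_r\in\hat N^q$, $p+q+1=n$, where $k+(w_1,\dots,w_q)=(w_1+k,\dots,w_q+k)$. For $\vec v\in\hat N^n,\vec w\in\hat N^m$: $\vec v\nearrow\vec w=(\vec v,n\triangleright w_1,\dots,n\triangleright w_m)$ with $n\triangleright a=a+n$ for $a\neq1$, $n\triangleright1=1$; $\vec v\nwarrow\vec w=(\vec v,n+\vec w)$; $()$ is a two-sided unit for both. $\varpi_{()}(\vec x)=()$ and $\varpi_{\vec v}(\vec x)=\varpi_{\vec v_l}(\vec x)\nearrow\vec x\nwarrow\varpi_{\vec v_r}(\vec x)$ for $\vec v=\vec v_l\vee\vec v_r$; $\vec u\tilde\ltimes\vec v:=\varpi_{\vec u}(\vec v)\in\hat N^{nm}$. The order is componentwise: $\vec v\le\vec w$ iff $v_i\le w_i$ for all $i$, and $<$ means $\le$ and $\ne$. *)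

From mathcomp Require Import all_boot.
Set Implicit Arguments. Unset Strict Implicit. Unset Printing Implicit Defensive.

(* Planar rooted binary trees; Node l r = l \vee r. *)
Inductive btree := Leaf | Node of btree & btree.

Fixpoint nint (t : btree) : nat :=
  match t with Leaf => 0 | Node l r => (nint l + nint r).+1 end.

Fixpoint name (t : btree) : seq nat :=
  match t with
  | Leaf => [::]
  | Node l r => name l ++ 1 :: map (addn (nint l).+1) (name r)
  end.

(* \hat N^n as a predicate on sequences *)
Definition Nhat (n : nat) (v : seq nat) : Prop :=
  exists t, nint t = n /\ name t = v.

(* v ↗ w, with n = size v (a name in \hat N^n has length n) *)
Definition nearrow (v w : seq nat) : seq nat :=
  v ++ map (fun a => if a == 1 then 1 else a + size v) w.

Definition nwarrow (v w : seq nat) : seq nat :=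
  v ++ map (addn (size v)) w.

(* varpi_v(x), v given by its (unique) tree *)
Fixpoint varpi (t : btree) (x : seq nat) : seq nat :=
  match t with
  | Leaf => [::]
  | Node l r => nwarrow (nearrow (varpi l x) x) (varpi r x)
  end.

(* u ~⋉ v := varpi_u(v), where u = name tu *)
Definition tltimes (tu : btree) (v : seq nat) : seq nat := varpi tu v.

Definition cle (v w : seq nat) : bool := all2 leq v w.
Definition clt (v w : seq nat) : bool := cle v w && (v != w).

From mathcomp Require Import all_boot zify.

(* A tree product x ~⋉ a consists of n consecutive blocks, one per entry c of
   x, each a copy of a in which every entry equal to 1 is replaced by
   (c-1)m+1 and every other entry is shifted by a constant depending only on
   the position of the block.  Since every name a contains the entry 1, the
   blocks compare exactly as the entries of x compare, which gives (ii).  For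
   (i), the recursive description of varpi_x only applies two order-embeddings
   to the shared argument a, so comparing x ~⋉ a with x ~⋉ b is comparing a
   with b.  Both orders are partial orders, so the strict versions follow. *)

Lemma cle_cat u v u' v' :
  size u = size u' -> cle (u ++ v) (u' ++ v') = cle u u' && cle v v'.
Proof. by elim: u u' => [|a u IH] [|b u'] //= [] /IH ->; rewrite andbA. Qed.

Lemma cle_refl u : cle u u.
Proof. by elim: u => //= a u; rewrite leqnn. Qed.

Lemma cle_anti u v : cle u v -> cle v u -> u = v.
Proof.
elim: u v => [|a u IH] [|b v] //= /andP[le_ab le_uv] /andP[le_ba le_vu].
by rewrite (IH v) // (@anti_leq a b) ?le_ab.
Qed.

Lemma clt_leAnge u v : clt u v = cle u v && ~~ cle v u.
Proof.
rewrite /clt; case le_uv: (cle u v) => //=; congr negb.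
apply/eqP/idP => [-> | le_vu]; first exact: cle_refl.
exact: cle_anti.
Qed.

Lemma cle_map_addn k u v : cle (map (addn k) u) (map (addn k) v) = cle u v.
Proof. by elim: u v => [|a u IH] [|b v] //=; rewrite IH leq_add2l. Qed.

Lemma cle_map_nearrow k u v : all (leq 1) u -> all (leq 1) v ->
  cle (map (fun a => if a == 1 then 1 else a + k) u)
      (map (fun a => if a == 1 then 1 else a + k) v) = cle u v.
Proof.
elim: u v => [|a u IH] [|b v] //= /andP[a_gt0 u_gt0] /andP[b_gt0 v_gt0].
by rewrite IH //; congr andb; case: eqP; case: eqP; lia.
Qed.

Lemma size_name t : size (name t) = nint t.
Proof. by elim: t => //= l IHl r IHr; rewrite size_cat /= size_map IHl IHr addnS. Qed.

Lemma name_gt0 t : all (leq 1) (name t).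
Proof.
elim: t => //= l IHl r IHr; rewrite all_cat IHl /= all_map.
by apply/allP => a _ /=; rewrite addSn.
Qed.

Lemma mem1_name t : 0 < nint t -> 1 \in name t.
Proof. by case: t => //= l r _; rewrite mem_cat in_cons eqxx orbT. Qed.

Lemma size_varpi t x : size (varpi t x) = nint t * size x.
Proof.
elim: t => //= l IHl r IHr.
by rewrite !size_cat !size_map IHl IHr mulSn mulnDl addnCA addnA.
Qed.

Lemma cle_varpi2 t x y :
  size x = size y -> all (leq 1) x -> all (leq 1) y ->
  cle (varpi t x) (varpi t y) = (nint t == 0) || cle x y.
Proof.
move=> eq_sz x_gt0 y_gt0; elim: t => //= l IHl r IHr.
rewrite /nwarrow /nearrow !cle_cat ?size_cat ?size_map ?size_varpi ?eq_sz //.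
rewrite cle_map_addn cle_map_nearrow // IHl IHr.
by case: (cle x y); rewrite ?orbT ?andbF.
Qed.

Definition block (c k : nat) (x : seq nat) : seq nat :=
  map (fun a => if a == 1 then c else a + k) x.

(* [s] counts the blocks preceding the first one. *)
Fixpoint blocks (m s : nat) (v x : seq nat) : seq nat :=
  if v is c :: v' then block (c.-1 * m).+1 (s * m) x ++ blocks m s.+1 v' x
  else [::].

Lemma blocks_cat m s u w x :
  blocks m s (u ++ w) x = blocks m s u x ++ blocks m (s + size u) w x.
Proof.
elim: u s => [|c u IH] s /=; first by rewrite addn0.
by rewrite IH catA addSnnS.
Qed.

Lemma blocks_shift m s q w x : all (leq 1) w ->
  blocks m (s + q) (map (addn q) w) x = map (addn (q * m)) (blocks m s w x).
Proof.
elim: w s => [|c w IH] s //= /andP[c_gt0 w_gt0].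
rewrite map_cat -addSn IH // /block -map_comp; congr (_ ++ _).
by apply: eq_map => a /=; case: (a == 1); case: c c_gt0 => // c _; nia.
Qed.

Lemma varpi_blocks t x : varpi t x = blocks (size x) 0 (name t) x.
Proof.
elim: t => //= l IHl r IHr.
rewrite blocks_cat size_name /nwarrow /nearrow -IHl -catA /= size_cat size_map.
rewrite size_varpi -(add0n (nint l).+1) blocks_shift ?name_gt0 // -IHr.
by rewrite mulSn addnC.
Qed.

Lemma cle_block c1 c2 k x :
  cle (block c1 k x) (block c2 k x) = (1 \notin x) || (c1 <= c2).
Proof.
elim: x => [|a x IH] //=; rewrite IH in_cons.
case: eqP => [-> | /eqP a_neq1] /=; last by rewrite leqnn eq_sym (negbTE a_neq1).
by case: (c1 <= c2); rewrite ?orbT ?andbF.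
Qed.

Lemma cle_blocks m s v w x : 0 < m -> 1 \in x -> size v = size w ->
  all (leq 1) v -> all (leq 1) w ->
  cle (blocks m s v x) (blocks m s w x) = cle v w.
Proof.
move=> m_gt0 x1; elim: v w s => [|c v IH] [|d w] s //= [] eq_sz.
move=> /andP[c_gt0 v_gt0] /andP[d_gt0 w_gt0].
rewrite cle_cat ?size_map // IH // cle_block x1.
by rewrite ltnS leq_pmul2r //; case: c c_gt0 => // c _; case: d d_gt0.
Qed.

Lemma cle_tltimes2 tx ta tb : 0 < nint tx -> nint ta = nint tb ->
  cle (tltimes tx (name ta)) (tltimes tx (name tb)) = cle (name ta) (name tb).
Proof.
move=> tx_gt0 eq_ab.
by rewrite /tltimes cle_varpi2 ?name_gt0 ?size_name // eqn0Ngt tx_gt0.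
Qed.

Lemma cle_tltimes1 tx ty ta : nint tx = nint ty -> 0 < nint ta ->
  cle (tltimes tx (name ta)) (tltimes ty (name ta)) = cle (name tx) (name ty).
Proof.
move=> eq_xy ta_gt0; rewrite /tltimes !varpi_blocks.
by rewrite cle_blocks ?name_gt0 ?mem1_name ?size_name.
Qed.

Theorem mainTheorem9 (n m : nat) (tx ty ta tb : btree) :
  1 <= n -> 1 <= m ->
  nint tx = n -> nint ty = n -> nint ta = m -> nint tb = m ->
  (clt (tltimes tx (name ta)) (tltimes tx (name tb)) <-> clt (name ta) (name tb)) /\
  (clt (tltimes tx (name ta)) (tltimes ty (name ta)) <-> clt (name tx) (name ty)).
Proof.
move=> n_gt0 m_gt0 tx_n ty_n ta_m tb_m; rewrite !clt_leAnge.
have tx_gt0 : 0 < nint tx by rewrite tx_n.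
have ta_gt0 : 0 < nint ta by rewrite ta_m.
have eq_ab : nint ta = nint tb by rewrite ta_m.
have eq_xy : nint tx = nint ty by rewrite tx_n.
by rewrite !cle_tltimes2 // !cle_tltimes1.
Qed.
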